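(* Let $K$ be a positive integer, let $J$ be a positive integer or $\infty$, and write $[J]=\{1,\dots,J\}$ (with $[J]=\mathbb{Z}_+$ if $J=\infty$). Let $Q=[Q_1,\dots,Q_K]$ with $Q_k:[J]\to\{0,1\}$ and $A=[A_1,\dots,A_K]$ with $A_k:[J]\to\mathbb{R}$, and assume that for every $S\subset\{1,\dots,K\}$ with $\mathcal{R}(S)$ non-empty, the columns of $A_{[\mathcal{R}(S),S]}$ are linearly independent. Let $k\neq k'$ and suppose $\operatorname{supp}(Q_{k'})$ is non-empty. If $k'$ masks $k$, then $A_k$ and $A_{k'}$ are linearly independent.
   Context: $\operatorname{supp}(Q_k)=\{j: Q_k(j)=1\}$. For $S\subset\{1,\dots,K\}$, $\mathcal{R}(S)\subset[J]$ is the set of indices $j$ such that $Q_l(j)=1$ for all $l\in S$ and $Q_l(j)=0$ for all $l\notin S$. $A_{[\mathcal{R},S]}$ denotes the submatrix of $A$ with rows in $\mathcal{R}$ and columns in $S$. We say $k'$ masks $k$ if $\operatorname{supp}(Q_{k'})\subset\operatorname{supp}(Q_k)$. *)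

From HB Require Import structures.
From mathcomp Require Import all_boot all_order all_algebra.
Set Implicit Arguments. Unset Strict Implicit. Unset Printing Implicit Defensive.
Import Order.TTheory GRing.Theory Num.Theory.
Local Open Scope ring_scope.

(* J : option nat encodes J in Z_+ \cup {oo}: Some n is the finite J = n,
   None is J = oo. Item indices are 0-based naturals: [J] = {0,..,n-1}
   (resp. all of nat). *)
Definition inJ (J : option nat) (j : nat) : bool :=
  if J is Some n then (j < n)%N else true.

Definition RS (K : nat) (J : option nat) (Q : 'I_K -> nat -> bool)
  (S : {set 'I_K}) (j : nat) : bool :=
  inJ J j && [forall l, Q l j == (l \in S)].

Definition cols_lin_indep (R : realFieldType) (K : nat) (J : option nat)
  (Q : 'I_K -> nat -> bool) (A : 'I_K -> nat -> R) (S : {set 'I_K}) : Prop :=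
  forall c : 'I_K -> R,
    (forall j, RS J Q S j -> \sum_(l in S) c l * A l j = 0) ->
    forall l, l \in S -> c l = 0.

Definition masks (K : nat) (J : option nat) (Q : 'I_K -> nat -> bool)
  (k' k : 'I_K) : Prop :=
  forall j, inJ J j -> Q k' j -> Q k j.

Definition lin_indep2 (R : realFieldType) (J : option nat) (u v : nat -> R) : Prop :=
  forall a b : R, (forall j, inJ J j -> a * u j + b * v j = 0) -> a = 0 /\ b = 0.

From HB Require Import structures.
From mathcomp Require Import all_boot all_order all_algebra.
Import Order.TTheory GRing.Theory Num.Theory.
Set Implicit Arguments. Unset Strict Implicit. Unset Printing Implicit Defensive.
Local Open Scope ring_scope.

(* Pick j in supp(Q_k') and let S be the set of attributes l with Q_l(j) = 1.
   Then j lies in R(S), and masking puts both k and k' in S, so A_k and A_k'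
   are two distinct columns of A_[R(S),S]; being independent on the rows R(S),
   they are independent on all of [J]. *)

Lemma RS_in_J (K : nat) (J : option nat) (Q : 'I_K -> nat -> bool)
    (S : {set 'I_K}) (j : nat) :
  RS J Q S j -> inJ J j.
Proof. by case/andP. Qed.

Lemma RS_profile (K : nat) (J : option nat) (Q : 'I_K -> nat -> bool) (j : nat) :
  inJ J j -> RS J Q [set l | Q l j] j.
Proof. by move=> Jj; rewrite /RS Jj; apply/forallP => l; rewrite inE. Qed.

Lemma cols_lin_indep_pair (R : realFieldType) (K : nat) (J : option nat)
    (Q : 'I_K -> nat -> bool) (A : 'I_K -> nat -> R) (S : {set 'I_K})
    (k k' : 'I_K) :
  cols_lin_indep J Q A S -> k \in S -> k' \in S -> k != k' ->
  lin_indep2 J (A k) (A k').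
Proof.
move=> indepS kS k'S nkk' a b abA.
pose c l := if l == k then a else if l == k' then b else 0.
have ck : c k = a by rewrite /c eqxx.
have ck' : c k' = b by rewrite /c eq_sym (negbTE nkk') eqxx.
have sum_c (j : nat) : \sum_(l in S) c l * A l j = a * A k j + b * A k' j.
  rewrite (bigD1 k) //= (bigD1 k') /=; last by rewrite k'S eq_sym.
  rewrite big1 ?addr0 -?ck -?ck' // => l /andP[/andP[_ /negbTE nlk] /negbTE nlk'].
  by rewrite /c nlk nlk' mul0r.
have c0 := indepS c (fun j Rj => etrans (sum_c j) (abA j (RS_in_J Rj))).
by rewrite -ck -ck' !c0.
Qed.

Theorem lemma1 (R : realFieldType) (K : nat) (J : option nat)
  (Q : 'I_K -> nat -> bool) (A : 'I_K -> nat -> R) (k k' : 'I_K) :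
  (0 < K)%N ->
  (forall n, J = Some n -> (0 < n)%N) ->
  (forall S : {set 'I_K}, (exists j, RS J Q S j) -> cols_lin_indep J Q A S) ->
  k != k' ->
  (exists j, inJ J j && Q k' j) ->
  masks J Q k' k ->
  lin_indep2 J (A k) (A k').
Proof.
move=> _ _ indep nkk' [j /andP[Jj Qk'j]] k'_masks_k.
pose S := [set l | Q l j].
have kS : k \in S by rewrite inE; exact: k'_masks_k.
have k'S : k' \in S by rewrite inE.
apply: (cols_lin_indep_pair _ kS k'S nkk').
exact: indep S (ex_intro _ j (RS_profile Q Jj)).
Qed.
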